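(* Let $k\in\mathbb{Z}$ and $\imath\in\mathbb{Z}_{>1}$. The rational polygon $\mathrm{conv}((0,0),(k+1/2,\imath),(k+4/5,\imath))$ contains no lattice point other than $(0,0)$ if and only if it is lattice equivalent to one of $\mathrm{conv}((0,0),(-1/2,\imath),(-1/5,\imath))$, $\mathrm{conv}((0,0),(1/2,\imath),(4/5,\imath))$, or, only when $\imath$ is even, $\mathrm{conv}((0,0),(\tfrac{\imath}{2}-\tfrac12,\imath),(\tfrac{\imath}{2}-\tfrac15,\imath))$.
   Context: Lattice equivalence means equivalence under maps $v\mapsto Av+w$ with $A\in\mathrm{GL}_2(\mathbb{Z})$ and $w\in\mathbb{Z}^2$. *)

From HB Require Import structures.
From mathcomp Require Import all_boot all_order all_algebra.
Set Implicit Arguments. Unset Strict Implicit. Unset Printing Implicit Defensive.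
Import Order.TTheory GRing.Theory Num.Theory.
Local Open Scope ring_scope.

Definition pt := (rat * rat)%type.

Definition conv3 (p q r : pt) (x : pt) : Prop :=
  exists a b c : rat, [/\ 0 <= a, 0 <= b, 0 <= c, a + b + c = 1 &
    x = (a * p.1 + b * q.1 + c * r.1, a * p.2 + b * q.2 + c * r.2)].

Definition lattice_pt (x : pt) : Prop :=
  exists m n : int, x = (m%:~R, n%:~R).

(* the affine map v |-> A v + w, A = [[a b];[c d]] *)
Definition affZ (a b c d w1 w2 : int) (x : pt) : pt :=
  (a%:~R * x.1 + b%:~R * x.2 + w1%:~R, c%:~R * x.1 + d%:~R * x.2 + w2%:~R).

Definition unimodular (a b c d : int) : Prop :=
  a * d - b * c = 1 \/ a * d - b * c = -1.

Definition lattice_equiv (P Q : pt -> Prop) : Prop :=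
  exists a b c d w1 w2 : int, [/\ unimodular a b c d,
    (forall x, P x -> Q (affZ a b c d w1 w2 x)) &
    (forall y, Q y -> exists2 x, P x & affZ a b c d w1 w2 x = y)].

(* Shearing by (x, y) |-> (x - m y, y) preserves the lattice, so k can be reduced
   modulo i.  With h = 2 k + 1, a lattice point (n, t), 0 < t <= i, lies in the
   triangle iff 0 <= 2 n i - h t <= 3 t / 5.  For k = 0, k = i - 1 and (i even)
   k = i / 2 - 1 there is no such point; for every other residue one is built
   from a common divisor of h and 2 i, or else from the inverse s of h modulo
   2 i, taking t = 2 i - s, t = 4 or t = 2 i - ceil(i / s) s. *)

From HB Require Import structures.
From mathcomp Require Import all_boot all_order all_algebra.
From mathcomp Require Import ring lra zify.
Set Implicit Arguments. Unset Strict Implicit. Unset Printing Implicit Defensive.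
Import Order.TTheory GRing.Theory Num.Theory.
Local Open Scope ring_scope.

Definition lattice_free0 (P : pt -> Prop) : Prop :=
  forall x, P x -> lattice_pt x -> x = (0, 0).

Lemma mem_conv3_apex (p q c X Y : rat) : 0 < c -> p < q ->
  conv3 (0, 0) (p, c) (q, c) (X, Y) <->
  [/\ 0 <= Y, Y <= c, p * Y <= X * c & X * c <= q * Y].
Proof.
move=> c_gt0 lt_pq; split.
- case=> a [b [e [a_ge0 b_ge0 e_ge0 sum1 [-> ->]]]] /=.
  have ac_ge0 : 0 <= a * c by apply: mulr_ge0; lra.
  have bc_ge0 : 0 <= b * c by apply: mulr_ge0; lra.
  have ec_ge0 : 0 <= e * c by apply: mulr_ge0; lra.
  have bqpc_ge0 : 0 <= b * c * (q - p) by apply: mulr_ge0; lra.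
  have eqpc_ge0 : 0 <= e * c * (q - p) by apply: mulr_ge0; lra.
  have -> : a * 0 + b * c + e * c = (1 - a) * c by rewrite -sum1; ring.
  have -> : (a * 0 + b * p + e * q) * c = p * (1 - a) * c + e * c * (q - p).
    by rewrite -sum1; ring.
  have -> : q * ((1 - a) * c) = p * (1 - a) * c + (1 - a) * c * (q - p) by ring.
  have -> : 1 - a = b + e by rewrite -sum1; ring.
  split; nra.
- case=> Y_ge0 Y_le_c left_edge right_edge.
  have c_neq0 : c != 0 by rewrite gt_eqF.
  have qp_neq0 : q - p != 0 by rewrite subr_eq0 gt_eqF.
  exists ((c - Y) / c), ((q * Y - X * c) / ((q - p) * c)),
         ((X * c - p * Y) / ((q - p) * c)).
  split; first (by apply: divr_ge0; lra);
    try (by apply: divr_ge0; [lra | apply: mulr_ge0; lra]).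
  + by field; rewrite c_neq0 qp_neq0.
  + by congr (_, _) => /=; field; rewrite c_neq0 qp_neq0.
Qed.

(* conv((0,0), (a/10, i), (b/10, i)) contains no lattice point (n, t) with t > 0. *)
Definition triangle_lattice_free (i a b : int) : Prop :=
  forall n t : int, 0 < t -> t <= i ->
    a * t <= 10 * n * i -> 10 * n * i <= b * t -> False.

Lemma mem_conv3_apex_int (p q : rat) (a b i n t : int) : 0 < i -> p < q ->
  10 * p = a%:~R -> 10 * q = b%:~R ->
  conv3 (0, 0) (p, i%:~R) (q, i%:~R) (n%:~R, t%:~R) <->
  [/\ 0 <= t, t <= i, a * t <= 10 * n * i & 10 * n * i <= b * t].
Proof.
move=> i_gt0 lt_pq def_a def_b; rewrite mem_conv3_apex ?ltr0z //.
have scale10 (u v : rat) : (u <= v) = (10 * u <= 10 * v) by rewrite ler_pM2l.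
rewrite [p * _ <= _]scale10 [_ <= q * _]scale10 !mulrA def_a def_b.
have -> : 10 * n%:~R * i%:~R = (10 * n * i)%:~R :> rat by rewrite !intrM.
by rewrite -!intrM !ler_int ler0z.
Qed.

Lemma lattice_free0_triangleE (p q : rat) (a b i : int) : 0 < i -> p < q ->
  10 * p = a%:~R -> 10 * q = b%:~R ->
  lattice_free0 (conv3 (0, 0) (p, i%:~R) (q, i%:~R)) <->
  triangle_lattice_free i a b.
Proof.
move=> i_gt0 lt_pq def_a def_b; split.
- move=> free n t t_gt0 t_le_i left_edge right_edge.
  have /(congr1 snd)/eqP : ((n%:~R, t%:~R) : pt) = (0, 0).
    apply: free; last by exists n, t.
    by rewrite (mem_conv3_apex_int _ _ i_gt0 lt_pq def_a def_b); split; lia.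
  by rewrite /= intr_eq0; lia.
- move=> free _ /[swap] -[n [t ->]].
  move/(mem_conv3_apex_int _ _ i_gt0 lt_pq def_a def_b).
  case=> t_ge0 t_le_i left_edge right_edge.
  have [t0 | t_neq0] := eqVneq t 0; last first.
    by case: (free n t) => //; lia.
  suff -> : n = 0 by rewrite t0.
  by move: left_edge right_edge; rewrite t0 !mulr0; lia.
Qed.

Lemma lattice_free0_equiv (P Q : pt -> Prop) :
  lattice_equiv P Q -> P (0, 0) -> lattice_free0 Q -> lattice_free0 P.
Proof.
case=> a [b [c [d [w1 [w2 [unimod fwd _]]]]]] P0 freeQ _ /[swap] -[m [n ->]] /fwd Qx.
have int_eq0 (z : int) : (z%:~R : rat) = 0 -> z = 0 by move/eqP; rewrite intr_eq0 => /eqP.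
have image_lattice (x y : int) : lattice_pt (affZ a b c d w1 w2 (x%:~R, y%:~R)).
  by exists (a * x + b * y + w1), (c * x + d * y + w2); rewrite /affZ !intrD !intrM.
have [/int_eq0 w1_0 /int_eq0 w2_0] : (w1%:~R, w2%:~R) = (0, 0) :> pt.
  by rewrite -(freeQ _ (fwd _ P0) (image_lattice 0 0)) /affZ /= !mulr0 !add0r.
have [] := freeQ _ Qx (image_lattice m n).
rewrite /affZ w1_0 w2_0 /= !addr0 -!intrM -!intrD => /int_eq0 e1 /int_eq0 e2.
have em : (a * d - b * c) * m = d * (a * m + b * n) - b * (c * m + d * n) by ring.
have en : (a * d - b * c) * n = a * (c * m + d * n) - c * (a * m + b * n) by ring.
rewrite e1 e2 !mulr0 subr0 in em en.
suff [-> ->] : m = 0 /\ n = 0 by [].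
by case: unimod => det; rewrite det in em en; lia.
Qed.

Lemma lattice_equiv_shear (p q p' q' c : rat) (m : int) : 0 < c -> p < q ->
  p' = p - m%:~R * c -> q' = q - m%:~R * c ->
  lattice_equiv (conv3 (0, 0) (p, c) (q, c)) (conv3 (0, 0) (p', c) (q', c)).
Proof.
move=> c_gt0 lt_pq -> ->.
have lt_pq' : p - m%:~R * c < q - m%:~R * c by lra.
have shearE (x : pt) : affZ 1 (- m) 0 1 0 0 x = (x.1 - m%:~R * x.2, x.2).
  by rewrite /affZ mulrNz !mulr1z !mulr0z mulNr !mul0r !mul1r !addr0 add0r.
exists 1, (- m), 0, 1, 0, 0; split.
- by left; ring.
- move=> [X Y]; rewrite shearE !mem_conv3_apex //= => -[Y_ge0 Y_le_c left right].
  by split => //; nra.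
- move=> [X Y]; rewrite mem_conv3_apex // => -[Y_ge0 Y_le_c left right].
  exists (X + m%:~R * Y, Y); last by rewrite shearE /=; congr (_, _); ring.
  by rewrite mem_conv3_apex //; split => //; nra.
Qed.

Lemma triangle_lattice_free_shift (i a b q : int) :
  triangle_lattice_free i (a + 10 * q * i) (b + 10 * q * i) ->
  triangle_lattice_free i a b.
Proof.
move=> free n t t_gt0 t_le_i left right; apply: (free (n + q * t) t) => //.
- by rewrite mulrDl; lra.
- by rewrite mulrDl; lra.
Qed.

Lemma triangle_lattice_free_pos (i a b : int) : 0 < i -> 0 < a -> b < 10 ->
  triangle_lattice_free i a b.
Proof. by move=> i_gt0 a_gt0 b_lt10 n t *; have [|] := lerP n 0; nia. Qed.

Lemma triangle_lattice_free_neg (i a b : int) : 0 < i -> -10 < a -> b < 0 ->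
  triangle_lattice_free i a b.
Proof. by move=> i_gt0 a_gtN10 b_lt0 n t *; have [|] := lerP 0 n; nia. Qed.

Lemma triangle_lattice_free_half (m : int) : 0 < m ->
  triangle_lattice_free (2 * m) (10 * m - 5) (10 * m - 2).
Proof.
move=> m_gt0 n t t_gt0 t_le left right.
have [z_ge0 | z_lt0] := lerP 0 (2 * n - t); first by nia.
have [z_leN2 | z_gtN2] := lerP (2 * n - t) (-2); first by nia.
have t_eq : t = 2 * m by nia.
by lia.
Qed.

Definition upper_approx (i h : int) : Prop :=
  exists n t : int,
    [/\ 0 < t, t <= i, 0 <= 2 * n * i - h * t & 5 * (2 * n * i - h * t) <= 3 * t].

Lemma upper_approx_not_lattice_free (i h : int) :
  upper_approx i h -> ~ triangle_lattice_free i (5 * h) (5 * h + 3).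
Proof. by case=> n [t [t_gt0 t_le_i lo hi]] /(_ n t); apply; lia. Qed.

Lemma upper_approx_common_divisor (i h d : int) : 0 < i -> 2 <= d ->
  (d %| h)%Z -> (d %| 2 * i)%Z -> upper_approx i h.
Proof.
move=> i_gt0 d_ge2 /dvdzP[n ->] /dvdzP[t def_2i].
by exists n, t; split; nia.
Qed.

Lemma upper_approx_inverse (i h s p : int) : 3 <= s -> s <= i - 3 ->
  h * s = 2 * i * p + 1 -> upper_approx i h.
Proof.
move=> s_ge3 s_le def_hs.
have s_neq4 : s != 4 by apply/eqP=> s4; move: def_hs; rewrite s4; lia.
have ceil_bound : (i + s - 1) * (3 * s + 5) <= 6 * i * s.
  have [s3 | s_neq3] := eqVneq s 3.
    by move: def_hs; rewrite s3 => def_hs; have [|] := eqVneq i 6; nia.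
  have : 0 <= (s - 5) * (i - 3 - s) by apply: mulr_ge0; lia.
  by nia.
have [j [j_lo j_hi]] : exists j, i <= j * s /\ j * s <= i + s - 1.
  have s_gt0 : 0 < s by lia.
  exists ((i + s - 1) %/ s)%Z; have := divz_eq (i + s - 1) s.
  by have := ltz_pmod (i + s - 1) s_gt0; have := modz_ge0 (i + s - 1) (lt0r_neq0 s_gt0); lia.
(* With [j = ceil (i / s)] and [t = 2 i - j s], the defect [2 n i - h t] is [j]. *)
exists (h - j * p), (2 * i - j * s).
have -> : 2 * (h - j * p) * i - h * (2 * i - j * s) = j by nia.
by split; nia.
Qed.

Lemma multiple_in_gap (m q : int) : 0 < m * q -> m * q < m -> False.
Proof. by case: (lerP q 0); nia. Qed.

Lemma inverse_mod_exists (h M : int) : 0 < M -> gcdz h M = 1 ->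
  exists s p, [/\ 0 <= s, s < M & h * s = M * p + 1].
Proof.
move=> M_gt0 coprime_hM; have [u [v bezout]] := Bezoutz h M.
rewrite coprime_hM in bezout.
exists (u %% M)%Z, (- v - (u %/ M)%Z * h); split.
- by apply: modz_ge0; lia.
- exact: ltz_pmod.
- by have := divz_eq u M; nia.
Qed.

Lemma upper_approx_coprime (i h : int) : 2 <= i -> 3 <= h -> h <= 2 * i - 3 ->
  h != i - 1 -> gcdz h (2 * i) = 1 -> upper_approx i h.
Proof.
move=> i_ge2 h_ge3 h_le h_neq coprime_h.
have two_i_gt0 : 0 < 2 * i by lia.
have [s [p [s_ge0 s_lt def_hs]]] := inverse_mod_exists two_i_gt0 coprime_h.
(* For s > i the point with t = 2 i - s has defect 2 n i - h t = 1. *)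
have [s_gt_i | s_le_i] := ltrP i s.
  have s_neq : s != 2 * i - 1.
    apply/eqP=> def_s; apply: (@multiple_in_gap (2 * i) (h - p)); nia.
  by exists (h - p), (2 * i - s); split; nia.
have s_neq1 : s != 1 by apply/eqP=> s1; apply: (@multiple_in_gap (2 * i) p); nia.
have s_neq2 : s != 2 by apply/eqP=> s2; move: def_hs; rewrite s2; lia.
have s_neqi : s != i by apply/eqP=> si; apply: (@multiple_in_gap i (h - 2 * p)); nia.
have s_neqi1 : s != i - 1.
  apply/eqP=> si; case: (lerP (h - 2 * p) 0); first by nia.
  by case: (lerP 2 (h - 2 * p)); nia.
have [s_eq | s_neqi2] := eqVneq s (i - 2).
  by exists (h - 2 * p), 4; split; nia.
by apply: (@upper_approx_inverse i h s p) => //; lia.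
Qed.

Lemma upper_approx_mid (i h : int) : 2 <= i -> 3 <= h -> h <= 2 * i - 3 ->
  h != i - 1 -> upper_approx i h.
Proof.
move=> i_ge2 h_ge3 h_le h_neq.
have [coprime_h | not_coprime] := eqVneq (gcdz h (2 * i)) 1.
  exact: upper_approx_coprime.
have gcd_ge2 : 2 <= gcdz h (2 * i).
  suff : gcdz h (2 * i) != 0 by have : 0 <= gcdz h (2 * i) by []; lia.
  by rewrite gcdz_eq0 negb_and; apply/orP; right; lia.
by apply: (upper_approx_common_divisor _ gcd_ge2 (dvdz_gcdl _ _) (dvdz_gcdr _ _)); lia.
Qed.

Lemma triangle_lattice_free_cases (i r : int) : 1 < i -> 0 <= r -> r < i ->
  triangle_lattice_free i (10 * r + 5) (10 * r + 8) ->
  [\/ r = 0, r = i - 1 | i = 2 * r + 2].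
Proof.
move=> i_gt1 r_ge0 r_lt free.
have [-> | r_neq0] := eqVneq r 0; first by constructor 1.
have [-> | r_neq_top] := eqVneq r (i - 1); first by constructor 2.
have [-> | i_neq] := eqVneq i (2 * r + 2); first by constructor 3.
have /upper_approx_not_lattice_free : upper_approx i (2 * r + 1).
  by apply: upper_approx_mid; lia.
have -> : 5 * (2 * r + 1) = 10 * r + 5 by ring.
by rewrite -addrA => /(_ free).
Qed.

Lemma triangle_lattice_free_offset (k i : int) : 1 < i ->
  triangle_lattice_free i (10 * k + 5) (10 * k + 8) ->
  exists q r : int, k = q * i + r /\ [\/ r = 0, r = i - 1 | i = 2 * r + 2].
Proof.
move=> i_gt1 free_k; have i_gt0 : 0 < i by lia.
have def_k := divz_eq k i.
have r_ge0 : 0 <= (k %% i)%Z by apply: modz_ge0; lia.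
have r_lt : (k %% i)%Z < i by apply: ltz_pmod.
move: def_k r_ge0 r_lt; move: (k %/ i)%Z (k %% i)%Z => q r def_k r_ge0 r_lt.
exists q, r; split => //; apply: triangle_lattice_free_cases => //.
apply: (triangle_lattice_free_shift (q := q)).
have shiftE (c : int) : 10 * r + c + 10 * q * i = 10 * k + c by rewrite def_k; ring.
by rewrite !shiftE.
Qed.

Theorem mainTheorem13 (k i : int) (hi : 1 < i) :
  (forall x : pt,
     conv3 (0, 0) (k%:~R + 1 / 2%:R, i%:~R) (k%:~R + 4%:R / 5%:R, i%:~R) x ->
     lattice_pt x -> x = (0, 0))
  <->
  [\/ lattice_equiv
        (conv3 (0, 0) (k%:~R + 1 / 2%:R, i%:~R) (k%:~R + 4%:R / 5%:R, i%:~R))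
        (conv3 (0, 0) (- (1 / 2%:R), i%:~R) (- (1 / 5%:R), i%:~R)),
      lattice_equiv
        (conv3 (0, 0) (k%:~R + 1 / 2%:R, i%:~R) (k%:~R + 4%:R / 5%:R, i%:~R))
        (conv3 (0, 0) (1 / 2%:R, i%:~R) (4%:R / 5%:R, i%:~R)) |
      (2 %| i)%Z /\
      lattice_equiv
        (conv3 (0, 0) (k%:~R + 1 / 2%:R, i%:~R) (k%:~R + 4%:R / 5%:R, i%:~R))
        (conv3 (0, 0) (i%:~R / 2%:R - 1 / 2%:R, i%:~R)
                      (i%:~R / 2%:R - 1 / 5%:R, i%:~R))].
Proof.
have i_gt0 : 0 < i by lia.
have i_gt0' : 0 < i%:~R :> rat by rewrite ltr0z.
set T := conv3 _ _ _.
have [lt_k def_10p def_10q] : [/\ k%:~R + 1 / 2%:R < k%:~R + 4%:R / 5%:R :> rat,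
    10 * (k%:~R + 1 / 2%:R) = (10 * k + 5)%:~R :> rat &
    10 * (k%:~R + 4%:R / 5%:R) = (10 * k + 8)%:~R :> rat].
  by split; [lra | rewrite intrD intrM; field..].
have T0 : T (0, 0) by rewrite /T mem_conv3_apex //; split; rewrite ?mulr0 ?mul0r; lra.
have free_of_equiv (p q : rat) (a b : int) : p < q ->
    10 * p = a%:~R -> 10 * q = b%:~R -> triangle_lattice_free i a b ->
    lattice_equiv T (conv3 (0, 0) (p, i%:~R) (q, i%:~R)) -> lattice_free0 T.
  move=> lt_pq def_a def_b free equiv; apply: lattice_free0_equiv equiv T0 _.
  exact/(lattice_free0_triangleE i_gt0 lt_pq def_a def_b).
split.
- move/(lattice_free0_triangleE i_gt0 lt_k def_10p def_10q).
  case/triangle_lattice_free_offset => // q [r [def_k [r0 | r_top | i_half]]].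
  + apply: Or32; apply: (lattice_equiv_shear (m := q)) => //;
      by rewrite def_k r0; field.
  + apply: Or31; apply: (lattice_equiv_shear (m := q + 1)) => //;
      by rewrite def_k r_top; field.
  + apply: Or33; split; first by apply/dvdzP; exists (r + 1); lia.
    apply: (lattice_equiv_shear (m := q)) => //;
      by rewrite def_k [in i%:~R / _]i_half; field.
- case=> [equiv | equiv | [/dvdzP [m def_i] equiv]].
  + apply: (free_of_equiv _ _ (-5) (-2)) equiv; try by [lra | field].
    exact: triangle_lattice_free_neg.
  + apply: (free_of_equiv _ _ 5 8) equiv; try by [lra | field].
    exact: triangle_lattice_free_pos.
  + apply: (free_of_equiv _ _ (10 * m - 5) (10 * m - 2)) equiv;
      try by [lra | rewrite def_i; field].
    by rewrite def_i mulrC; apply: triangle_lattice_free_half; lia.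
Qed.
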